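(* Let $k \geq \ell \geq 2$, $k \geq 3$ and $n > k+\ell$. Then $g(n,k,\ell) < h(n,k,\ell)$, where $$g(n,k,\ell) = \sum_{2 \leq i \leq \ell+1} \binom{\ell+1}{i}\binom{n-\ell-1}{k-i} + \binom{\ell+1}{\ell},\qquad h(n,k,\ell) = \binom{n}{k} - 2\binom{n-\ell}{k} + \binom{n-2\ell}{k} + 2.$$
   Context: Binomial coefficients $\binom{a}{b}$ are $0$ when $b<0$ or $b>a$. *)

From mathcomp Require Import all_boot all_order all_algebra.
Set Implicit Arguments. Unset Strict Implicit. Unset Printing Implicit Defensive.
Import GRing.Theory Num.Theory.
Local Open Scope ring_scope.

(* Binomial coefficient C(a, b) with a natural top index and integer bottom
   index, equal to 0 when b < 0 (and, via 'C, when b > a). *)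
Definition binz (a : nat) (b : int) : int :=
  match b with
  | Posz m => ('C(a, m))%:Z
  | Negz _ => 0
  end.

Definition g_fun (n k l : nat) : int :=
  \sum_(2 <= i < l.+2) ('C(l.+1, i))%:Z * binz (n - l.+1)%N (k%:Z - i%:Z)
  + ('C(l.+1, l))%:Z.

Definition h_fun (n k l : nat) : int :=
  ('C(n, k))%:Z - 2 * ('C(n - l, k))%:Z + ('C(n - 2 * l, k))%:Z + 2.

From mathcomp Require Import all_boot all_order all_algebra.
From mathcomp Require Import zify.
Import GRing.Theory Num.Theory.
Local Open Scope ring_scope.

(* Write n = l + 1 + m.  Vandermonde's identity for C(n, k) = C(l+1 + m, k),
   split according to how many of the first l + 1 elements a k-set contains,
   shows that g(n,k,l) misses exactly the terms with 0 and 1 such elements, so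
   h - g = (l-1) C(m,k-1) - (C(m,k) - C(m-l+1,k)) - (l-1).  The hockey-stick
   bound C(m,k) - C(m-j,k) <= j C(m-1,k-1), together with Pascal's rule
   C(m,k-1) = C(m-1,k-1) + C(m-1,k-2) and C(m-1,k-2) >= 2, makes this
   at least l - 1 > 0. *)

Lemma big_ord_widen0 n1 n2 (F : nat -> nat) : (n1 <= n2)%N ->
  (forall i, (n1 <= i < n2)%N -> F i = 0%N) ->
  (\sum_(i < n1) F i = \sum_(i < n2) F i)%N.
Proof.
move=> le_n12 F0; rewrite (big_ord_widen n2 F le_n12) big_mkcond /=.
apply: eq_bigr => i _; case: ltnP => // le_n1i.
by rewrite F0 // le_n1i ltn_ord.
Qed.

Lemma Vandermonde_cond a m k :
  (\sum_(0 <= i < a.+1) 'C(a, i) * ((i <= k) * 'C(m, k - i)) = 'C(a + m, k))%N.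
Proof.
rewrite big_mkord.
pose F i := ('C(a, i) * ((i <= k) * 'C(m, k - i)))%N.
rewrite -binomial.Vandermonde.
transitivity (\sum_(i < k.+1) F i)%N; last first.
  by apply: eq_bigr => i _; rewrite /F -[(i <= k)%N]ltnS ltn_ord mul1n.
change (\sum_(i < a.+1) F i = \sum_(i < k.+1) F i)%N.
rewrite (@big_ord_widen0 _ (a + k).+1 F) ?ltnS ?leq_addr //; last first.
  by move=> i /andP[lt_ai _]; rewrite /F bin_small.
rewrite (@big_ord_widen0 k.+1 (a + k).+1 F) ?ltnS ?leq_addl //.
by move=> i /andP[lt_ki _]; rewrite /F leqNgt lt_ki mul0n muln0.
Qed.

Lemma binz_subn m k i : binz m (k%:Z - i%:Z) = ((i <= k) * 'C(m, k - i))%N%:Z.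
Proof.
case: (leqP i k) => [le_ik | lt_ki]; first by rewrite subzn // mul1n.
have : k%:Z - i%:Z < 0 by rewrite subr_lt0 ltz_nat.
by rewrite mul0n; case: (k%:Z - i%:Z).
Qed.

Lemma g_funE l m k : g_fun (l.+1 + m) k.+1 l =
  'C(l.+1 + m, k.+1)%:Z - 'C(m, k.+1)%:Z - (l.+1 * 'C(m, k))%:Z + l.+1%:Z.
Proof.
have vdm := Vandermonde_cond l.+1 m k.+1.
rewrite big_ltn // big_ltn // bin0 bin1 subn0 subn1 /= in vdm.
rewrite /g_fun binSn addKn.
under eq_bigr do rewrite binz_subn -PoszM.
rewrite -(big_morph Posz PoszD (erefl (Posz 0))) -vdm.
lia.
Qed.

Lemma h_funE l m k : h_fun (l.+1 + m) k.+1 l =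
  'C(l.+1 + m, k.+1)%:Z - 2 * 'C(m, k.+1)%:Z - 2 * 'C(m, k)%:Z
  + 'C(m.+1 - l, k.+1)%:Z + 2.
Proof.
rewrite /h_fun (_ : (l.+1 + m - l = m.+1)%N); last by lia.
rewrite (_ : (l.+1 + m - 2 * l = m.+1 - l)%N); last by lia.
rewrite binS; lia.
Qed.

Lemma leq_bin_subn a b j : (j <= a)%N ->
  ('C(a.+1, b.+1) <= 'C(a.+1 - j, b.+1) + j * 'C(a, b))%N.
Proof.
elim: j => [|j IHj] le_ja; first by rewrite subn0 mul0n addn0.
have := IHj (ltnW le_ja).
have -> : (a.+1 - j = (a - j).+1)%N by lia.
have -> : (a.+1 - j.+1 = a - j)%N by lia.
rewrite (binS (a - j)).
have := leq_bin2l b (leq_subr j a).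
nia.
Qed.

Lemma bin_ge2 a b : (0 < b)%N -> (b < a)%N -> (2 <= 'C(a, b))%N.
Proof.
case: a => // a; case: b => // b _ lt_ba.
rewrite binS.
have : (0 < 'C(a, b.+1))%N by rewrite bin_gt0.
have : (0 < 'C(a, b))%N by rewrite bin_gt0; lia.
lia.
Qed.

Lemma ltn_bin_gap a b j : (0 < j)%N -> (j <= a)%N -> (0 < b < a)%N ->
  ('C(a.+1, b.+2) + j < j * 'C(a.+1, b.+1) + 'C(a.+1 - j, b.+2))%N.
Proof.
move=> j_gt0 le_ja /andP[b_gt0 lt_ba].
have := @leq_bin_subn a b.+1 j le_ja.
have := @bin_ge2 a b b_gt0 lt_ba.
rewrite (binS a b).
nia.
Qed.

Theorem proposition4p2 (n k l : nat) :
  (2 <= l)%N -> (l <= k)%N -> (3 <= k)%N -> (k + l < n)%N ->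
  g_fun n k l < h_fun n k l.
Proof.
move=> l_ge2 le_lk k_ge3 lt_kl_n.
have [j Ej] : exists j, l = j.+2 by exists (l - 2)%N; lia.
have [b Eb] : exists b, k = b.+3 by exists (k - 3)%N; lia.
have [a En] : exists a, n = (l.+1 + a.+1)%N by exists (n - l.+2)%N; lia.
subst; rewrite g_funE h_funE.
have := @ltn_bin_gap a b.+1 j.+1.
have -> : (a.+2 - j.+2 = a.+1 - j.+1)%N by lia.
lia.
Qed.
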